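(* Let $G$ be a connected graph with a pair of vertices of order $h$ and a marking $S$. Let $v,v'$ be two vertices of $G$ joined by exactly $e\geq1$ edges, with weights $s$ and $s'$ where $s>s'$, and normalize the marking (by adding a constant vector) so that $s'=0$; assume $s\ge 2$. Let $G'$ be obtained from $G$ by thickening the edges between $v$ and $v'$. Then the group $\Phi(G')$ contains $(\mathbb{Z}/es\mathbb{Z})^{s-2}$ as a direct summand.
   Context: Graphs are finite, connected, may have multiple edges, no loops. With $c_{ij}$ ($i\neq j$) the number of edges joining $v_i,v_j$, $c_{ii}=-\sum_{j\ne i}c_{ij}$ and $M(G)=(c_{ij})$, one has $\mathbb{Z}^n/\mathrm{Im}(M(G))\cong\mathbb{Z}\times\Phi(G)$ with $\Phi(G)$ the finite torsion subgroup ($\mathrm{Im}$ = $\mathbb{Z}$-span of columns). A pair $\{v_i,v_j\}$ has order $h>0$ if there is $S=(s_1,\dots,s_n)^t\in\mathbb{Z}^n$ with $M(G)S=h(e_i-e_j)$ and $\gcd(s_1-s_n,\dots,s_{n-1}-s_n)=1$; $S$ is a marking and $s_k$ the weight of $v_k$; $S+\alpha(1,\dots,1)^t$ is also a marking. Thickening the $e$ edges between $v'$ (weight $s'$) and $v$ (weight $s>s'$): delete them, add new vertices $w_1,\dots,w_{s-s'-1}$, and with $w_0=v'$, $w_{s-s'}=v$, join $w_{k-1}$ and $w_k$ by $e(s-s')$ edges for $k=1,\dots,s-s'$. *)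

From HB Require Import structures.
From mathcomp Require Import all_boot all_order all_algebra.
Set Implicit Arguments. Unset Strict Implicit. Unset Printing Implicit Defensive.
Import Order.TTheory GRing.Theory Num.Theory.
Local Open Scope ring_scope.

(* A multigraph on vertex set 'I_n is given by c : 'I_n -> 'I_n -> nat,
   c i j = number of edges joining v_i and v_j. *)
Definition is_multigraph n (c : 'I_n -> 'I_n -> nat) : Prop :=
  (forall i j, c i j = c j i) /\ (forall i, c i i = 0%N).

Definition graph_connected n (c : 'I_n -> 'I_n -> nat) : Prop :=
  forall i j, connect [rel a b | (0 < c a b)%N] i j.

Definition Lap n (c : 'I_n -> 'I_n -> nat) : 'M[int]_n :=
  \matrix_(i, j) (if i == j then - \sum_(k | k != i) (c i k)%:Z else (c i j)%:Z).

Definition evec n (i : 'I_n) : 'cV[int]_n := delta_mx i 0.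

(* S is a marking for the pair {v_i, v_j} of order h (vertices 'I_n.+1,
   the last vertex v_n being ord_max). *)
Definition is_marking n (c : 'I_n.+1 -> 'I_n.+1 -> nat) (h : nat)
    (i j : 'I_n.+1) (S : 'cV[int]_n.+1) : Prop :=
  Lap c *m S = h%:Z *: (evec i - evec j) /\
  (\big[gcdn/0%N]_(k < n) `|S (widen_ord (leqnSn n) k) ord0 - S ord_max ord0|%N = 1%N).

(* Thickening the c v v' edges between v' (weight 0) and v (weight s):
   new vertices w_1..w_{s-1} are rshift n k (k : 'I_(s-1)) for w_{k+1};
   w_0 = v', w_s = v; consecutive w's joined by (c v v') * s edges. *)
Definition thick_pos n (v v' : 'I_n) (s : nat) (x : 'I_(n + (s - 1))) : option nat :=
  match split x with
  | inl i => if i == v' then Some 0%N else if i == v then Some s else None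
  | inr k => Some (nat_of_ord k).+1
  end.

Definition thicken n (c : 'I_n -> 'I_n -> nat) (v v' : 'I_n) (s : nat)
    : 'I_(n + (s - 1)) -> 'I_(n + (s - 1)) -> nat :=
  fun x y =>
  match split x, split y with
  | inl i, inl j =>
      if ((i == v) && (j == v')) || ((i == v') && (j == v)) then 0%N else c i j
  | _, _ =>
      match @thick_pos n v v' s x, @thick_pos n v v' s y with
      | Some a, Some b => if (a.+1 == b) || (b.+1 == a) then (c v v' * s)%N else 0%N
      | _, _ => 0%N
      end
  end.

(* Z^n / Im M and its torsion subgroup Phi, described via representatives. *)
Definition inIm n (M : 'M[int]_n) (x : 'cV[int]_n) : Prop :=
  exists y : 'cV[int]_n, x = M *m y.

Definition torsion_cls n (M : 'M[int]_n) (x : 'cV[int]_n) : Prop :=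
  exists k : nat, (0 < k)%N /\ inIm M (x *+ k).

(* A is (isomorphic to) a direct summand of Phi = torsion of Z^n/Im M:
   there are group homomorphisms iota : A -> Phi and pi : Phi -> A with
   pi \o iota = id.  iota is given by representatives, pi on representatives
   (additive on torsion classes and killing Im M, hence well defined on Phi). *)
Definition Phi_direct_summand n (M : 'M[int]_n) (A : zmodType) : Prop :=
  exists (iota : A -> 'cV[int]_n) (pi : 'cV[int]_n -> A),
  [/\ forall a, torsion_cls M (iota a),
      forall a b, inIm M (iota (a + b) - (iota a + iota b)),
      forall x y, torsion_cls M x -> torsion_cls M y -> pi (x + y) = pi x + pi y,
      forall x, inIm M x -> pi x = 0
    & forall a, pi (iota a) = a].

Arguments thick_pos {n} v v' s x.
Arguments thicken {n} c v v' s x y.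

(* Number the thickened path v' = w_0, w_1, ..., w_s = v and put E = e s.
   The Laplacian column of an inner vertex w_(k+1) is E times the second-difference
   vector u_k = e_(w_k) - 2 e_(w_(k+1)) + e_(w_(k+2)), so the classes of u_0, ...,
   u_(s-3) are E-torsion.  Every row of the Laplacian at an inner vertex is divisible
   by E, hence so is the functional x |-> sum_m (m - j)_+ x_(w_(m+1)) on Im M(G').
   The second differences of these ramps are Kronecker deltas, so read mod E the
   functionals split the map (Z/E)^(s-2) -> Phi(G') sending the basis to the u_k. *)

From HB Require Import structures.
From mathcomp Require Import all_boot all_order all_algebra.
From mathcomp Require Import zify ring.
Import Order.TTheory GRing.Theory Num.Theory.
Local Open Scope ring_scope.
Set Implicit Arguments. Unset Strict Implicit. Unset Printing Implicit Defensive.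

Section DirectSummandCriterion.
Variables (E r : nat).
Hypothesis E_gt1 : (1 < E)%N.

Definition Zp_lift (a : 'rV['Z_E]_r) : 'cV[int]_r := \col_k (a ord0 k : nat)%:Z.

Lemma intr_Zp_lift a k : (Zp_lift a k 0)%:~R = a ord0 k.
Proof. by rewrite mxE -pmulrn natr_Zp. Qed.

Lemma val_ZpD (x y : 'Z_E) : nat_of_ord (x + y) = ((x + y) %% E)%N.
Proof. by rewrite -val_Zp_nat // natrD !natr_Zp. Qed.

Lemma Zp_liftD a b :
  Zp_lift (a + b) - (Zp_lift a + Zp_lift b) =
  E%:Z *: \col_k - ((a ord0 k + b ord0 k) %/ E)%N%:Z.
Proof.
apply/colP => k; rewrite !mxE val_ZpD -PoszD.
by set x := (_ + _)%N; rewrite {2}(divn_eq x E) PoszD PoszM; ring.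
Qed.

Lemma intr_Zp_dvd (z : int) : (E%:Z %| z)%Z -> z%:~R = 0 :> 'Z_E.
Proof. by move=> /dvdzP [q ->]; rewrite intrM -pmulrn pchar_Zp // mulr0. Qed.

Variables (N : nat) (M : 'M[int]_N) (U D : 'M[int]_(N, r)) (F : 'M[int]_(r, N)).
Hypotheses (mulMD : M *m D = E%:Z *: U)
  (dvdz_mulFM : forall j x, (E%:Z %| (F *m M) j x)%Z) (mulFU : F *m U = 1%:M).

Lemma inIm_mulmx_scale (w : 'cV[int]_r) : inIm M (U *m (E%:Z *: w)).
Proof. by exists (D *m w); rewrite mulmxA mulMD -scalemxAl scalemxAr. Qed.

Lemma Phi_direct_summand_of_inverse_pair : Phi_direct_summand M 'rV['Z_E]_r.
Proof.
exists (fun a => U *m Zp_lift a), (fun x => \row_j ((F *m x) j 0)%:~R); split.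
- move=> a; exists E; split; first exact: ltnW.
  by rewrite -scaler_nat natz scalemxAr; apply: inIm_mulmx_scale.
- by move=> a b; rewrite -mulmxDr -mulmxBr Zp_liftD; apply: inIm_mulmx_scale.
- by move=> x y _ _; apply/rowP => j; rewrite mulmxDr !mxE intrD.
- move=> _ [y ->]; apply/rowP => j; rewrite mxE [RHS]mxE mulmxA; apply: intr_Zp_dvd.
  by rewrite mxE; apply: rpred_sum => x _; apply/dvdz_mulr/dvdz_mulFM.
- by move=> a; apply/rowP => j; rewrite mxE mulmxA mulFU mul1mx intr_Zp_lift.
Qed.

End DirectSummandCriterion.

Definition lap_stencil (k p : nat) : int :=
  (p == k)%:Z - 2 * (p == k.+1)%:Z + (p == k.+2)%:Z.

Lemma sum_mul_lap_stencil (g : nat -> int) (p k : nat) :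
  g 0%N = 0 -> (k.+1 < p)%N ->
  \sum_(m < p) g m.+1 * lap_stencil k m.+1 = g k - 2 * g k.+1 + g k.+2.
Proof.
move=> g0 kp.
have pick q : (q <= p)%N -> \sum_(m < p) g m.+1 * (m.+1 == q)%:Z = g q.
  case: q => [_|q qp]; first by rewrite g0 big1 // => m _; rewrite mulr0.
  rewrite (bigD1 (Ordinal qp)) //= eqxx mulr1 big1 ?addr0 // => m mq.
  suff -> : (m.+1 == q.+1)%N = false by rewrite mulr0.
  by rewrite eqSS; apply: contraNF mq.
rewrite /lap_stencil; under eq_bigr do rewrite mulrDr mulrBr mulrCA.
by rewrite big_split sumrB /= -mulr_sumr !pick //; lia.
Qed.

Section Thickening.
Variables (n : nat) (c : 'I_n -> 'I_n -> nat) (v v' : 'I_n) (s : nat).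
Hypotheses (vv' : v != v') (s_gt0 : (0 < s)%N).

Local Notation pos := (thick_pos v v' s).
Local Notation E := (c v v' * s)%N.

Lemma thick_pos_lshift i :
  pos (lshift (s - 1) i) = if i == v' then Some 0%N else if i == v then Some s else None.
Proof. by rewrite /thick_pos (unsplitK (inl _ i)). Qed.

Lemma thick_pos_rshift (k : 'I_(s - 1)) : pos (rshift n k) = Some k.+1.
Proof. by rewrite /thick_pos (unsplitK (inr _ k)). Qed.

Lemma thick_pos_inj x y p : pos x = Some p -> pos y = Some p -> x = y.
Proof.
have pos_l i : pos (lshift _ i) = Some p -> i = if p == 0%N then v' else v.
  rewrite thick_pos_lshift; case: eqP => [-> [<-] //|_].
  by case: eqP => // -> [<-]; rewrite gtn_eqF.
have pos_lr i (k : 'I_(s - 1)) : pos (lshift _ i) = Some p -> k.+1 <> p.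
  rewrite thick_pos_lshift; have := ltn_ord k.
  by case: eqP => _; [|case: eqP => // _] => lt [<-]; lia.
rewrite -[x]splitK -[y]splitK; case: (split x) => [i|k]; case: (split y) => [j|l] /=.
- by move=> /pos_l -> /pos_l ->.
- by move=> /(pos_lr _ l) ne; rewrite thick_pos_rshift => -[/ne].
- by rewrite thick_pos_rshift => -[kp] /(pos_lr _ k) /(_ kp).
- by rewrite !thick_pos_rshift => -[<-] [/val_inj ->].
Qed.

Lemma thick_pos_surj p : (p <= s)%N -> exists x, pos x = Some p.
Proof.
move=> ps; case: (posnP p) => [->|p_gt0].
  by exists (lshift (s - 1) v'); rewrite thick_pos_lshift eqxx.
have [lt_ps|ge_ps] := ltnP p s.
  have lt_p1 : (p.-1 < s - 1)%N by lia.
  by exists (rshift n (Ordinal lt_p1)); rewrite thick_pos_rshift prednK.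
exists (lshift (s - 1) v); rewrite thick_pos_lshift eqxx (negbTE vv').
by congr Some; lia.
Qed.

Lemma sum_thick_pos_eq p : (p <= s)%N -> \sum_x (pos x == Some p)%:Z = 1.
Proof.
move=> /thick_pos_surj [x0 px0].
rewrite (bigD1 x0) //= px0 eqxx big1 ?addr0 // => y /eqP yx0.
by case: eqP => // /thick_pos_inj /(_ px0).
Qed.

Lemma thicken_rshiftl (k : 'I_(s - 1)) z :
  thicken c v v' s (rshift n k) z =
  (E * ((pos z == Some (k : nat)) + (pos z == Some k.+2)))%N.
Proof.
rewrite /thicken (unsplitK (inr _ k)) thick_pos_rshift.
case: (pos z) => [b|] /=; last lia.
by rewrite !(inj_eq Some_inj) eqSS; move: E => m; case: ifP; lia.
Qed.

Lemma thicken_rshiftr (k : 'I_(s - 1)) z :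
  thicken c v v' s z (rshift n k) =
  (E * ((pos z == Some (k : nat)) + (pos z == Some k.+2)))%N.
Proof.
rewrite /thicken (unsplitK (inr _ k)) thick_pos_rshift.
case: (split z) => _ /=; (case: (pos z) => [b|] /=; last lia);
  by rewrite !(inj_eq Some_inj) eqSS; move: E => m; case: ifP; lia.
Qed.

Lemma Lap_thicken_rshift (k : 'I_(s - 1)) x :
  Lap (thicken c v v' s) x (rshift n k) = E%:Z * oapp (lap_stencil k) 0 (pos x).
Proof.
have k2_le_s : (k.+2 <= s)%N by have := ltn_ord k; lia.
rewrite mxE; case: eqVneq => [->|xw].
  rewrite big_rmcond => [|z]; last first.
    rewrite negbK => /eqP ->; rewrite thicken_rshiftl thick_pos_rshift !(inj_eq Some_inj).
    by rewrite gtn_eqF // ltn_eqF // addn0 muln0.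
  under eq_bigr do rewrite thicken_rshiftl PoszM PoszD.
  rewrite -mulr_sumr big_split /= !sum_thick_pos_eq //; last exact: ltnW (ltnW k2_le_s).
  by rewrite thick_pos_rshift /lap_stencil /= gtn_eqF // eqxx ltn_eqF.
rewrite thicken_rshiftr; case pxp: (pos x) => [p|] /=; last by rewrite addn0 muln0 mulr0.
have pk : p != k.+1.
  by apply: contra_neq xw => pk; apply: thick_pos_inj pxp _; rewrite pk thick_pos_rshift.
by rewrite /lap_stencil !(inj_eq Some_inj) (negbTE pk) /= mulr0 subr0 PoszM PoszD.
Qed.

Lemma dvdz_Lap_thicken_rshift (k : 'I_(s - 1)) x :
  (E%:Z %| Lap (thicken c v v' s) (rshift n k) x)%Z.
Proof.
rewrite mxE; case: eqP => _; last by rewrite thicken_rshiftl PoszM dvdz_mulr.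
by rewrite rpredN; apply: rpred_sum => z _; rewrite thicken_rshiftl PoszM dvdz_mulr.
Qed.

Definition new_vertex (k : 'I_(s - 2)) : 'I_(n + (s - 1)) :=
  rshift n (widen_ord (leq_sub2l s (leqnSn 1)) k).

Definition stencil_mx : 'M[int]_(n + (s - 1), s - 2) :=
  \matrix_(x, k) oapp (lap_stencil k) 0 (pos x).

Definition ramp_mx : 'M[int]_(s - 2, n + (s - 1)) :=
  \matrix_(j, x) if split x is inr m then (m - j)%N%:Z else 0.

Lemma mul_Lap_thicken_new_vertex :
  Lap (thicken c v v' s) *m colsub new_vertex 1%:M = E%:Z *: stencil_mx.
Proof.
rewrite mulmx_colsub mulmx1; apply/matrixP => x k.
by rewrite mxE Lap_thicken_rshift [RHS]mxE [in RHS]mxE.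
Qed.

Lemma dvdz_ramp_mx_Lap j x : (E%:Z %| (ramp_mx *m Lap (thicken c v v' s)) j x)%Z.
Proof.
rewrite mxE big_split_ord /= big1 ?add0r => [|i _]; last first.
  by rewrite mxE (unsplitK (inl _ i)) mul0r.
apply: rpred_sum => m _; rewrite mxE (unsplitK (inr _ m)).
exact/dvdz_mull/dvdz_Lap_thicken_rshift.
Qed.

Lemma ramp_mx_stencil : ramp_mx *m stencil_mx = 1%:M.
Proof.
apply/matrixP => j k; rewrite !mxE big_split_ord /= big1 ?add0r => [|i _]; last first.
  by rewrite mxE (unsplitK (inl _ i)) mul0r.
under eq_bigr => m _ do rewrite !mxE (unsplitK (inr _ m)) thick_pos_rshift.
rewrite (@sum_mul_lap_stencil (fun q => (q - j.+1)%N%:Z)) //; last first.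
  by have := ltn_ord k; lia.
have [<-|jk] := eqVneq j k; first lia.
by have /eqP : (j : nat) != k := jk; lia.
Qed.

End Thickening.

Theorem lemma1p7 (n : nat) (c : 'I_n.+1 -> 'I_n.+1 -> nat)
    (h : nat) (i j : 'I_n.+1) (S : 'cV[int]_n.+1)
    (v v' : 'I_n.+1) (e s : nat) :
  is_multigraph c -> graph_connected c ->
  (0 < h)%N -> i != j -> is_marking c h i j S ->
  v != v' -> c v v' = e -> (1 <= e)%N ->
  S v' ord0 = 0 -> S v ord0 = s%:Z -> (2 <= s)%N ->
  Phi_direct_summand (Lap (thicken c v v' s)) 'rV['Z_(e * s)]_(s - 2).
Proof.
move=> _ _ _ _ _ vv' <- e_gt0 _ _ s_ge2; have s_gt0 := ltnW s_ge2.
apply: (Phi_direct_summand_of_inverse_pair _ (mul_Lap_thicken_new_vertex c vv' s_gt0)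
  (dvdz_ramp_mx_Lap c vv' s_gt0) (ramp_mx_stencil vv' s_gt0)).
by rewrite (leq_trans s_ge2) // leq_pmull.
Qed.
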